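(* Let $r \geq 1$ be an integer. Then for every integer $n \geq 0$, $$\sum_{k=0}^{n} (-1)^k \frac{k!}{k+r}\, S(n,k) = \frac{1}{(r-1)!} \sum_{k=0}^{r-1} |s(r,k+1)|\, B_{n+k}.$$
   Context: For $n \geq 0$, $X^{\underline{n}} := X(X-1)\cdots(X-n+1)$ ($X^{\underline{0}}=1$). The (signed) Stirling numbers of the first kind $s(n,k)$ are defined by $X^{\underline{n}} = \sum_{k=0}^{n} s(n,k) X^k$, and the Stirling numbers of the second kind $S(n,k)$ by $X^n = \sum_{k=0}^{n} S(n,k) X^{\underline{k}}$ (for all $n\ge 0$), with $s(n,k)=S(n,k)=0$ when $n<k$. The Bernoulli numbers $B_n$ are defined by $\frac{t}{e^t-1} = \sum_{n\ge 0} B_n \frac{t^n}{n!}$. *)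

From HB Require Import structures.
From mathcomp Require Import all_boot all_order all_algebra.
Set Implicit Arguments. Unset Strict Implicit. Unset Printing Implicit Defensive.
Import Order.TTheory GRing.Theory Num.Theory.
Local Open Scope ring_scope.

Definition falling_poly (n : nat) : {poly int} :=
  \prod_(i < n) ('X - (i%:R)%:P).

Definition stirling1 (n k : nat) : int := (falling_poly n)`_k.

(* Stirling numbers of the second kind, via the standard recurrence
   S(0,0)=1, S(0,k+1)=0, S(n+1,0)=0, S(n+1,k+1) = (k+1) S(n,k+1) + S(n,k),
   which is equivalent to X^n = sum_k S(n,k) X^{\underline k}. *)
Fixpoint stirling2 (n k : nat) : nat :=
  match n, k with
  | 0, 0 => 1
  | 0, _.+1 => 0
  | _.+1, 0 => 0
  | n'.+1, k'.+1 => k'.+1 * stirling2 n' k'.+1 + stirling2 n' k'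
  end.

(* Bernoulli numbers defined by t/(e^t-1) = sum_n B_n t^n/n!.
   Multiplying by (e^t-1)/t = sum_m t^m/(m+1)! and comparing coefficients of
   t^n gives  sum_{k<=n} B_k / (k! (n-k+1)!) = [n = 0], i.e.
   B_n = - n! * sum_{k<n} B_k / (k! (n-k+1)!).  bern_list n = [B_0; ...; B_n]. *)
Fixpoint bern_list (n : nat) : seq rat :=
  match n with
  | 0 => [:: 1]
  | n'.+1 =>
      let l := bern_list n' in
      rcons l (- (n`!)%:R *
               \sum_(k < n) nth 0 l k / ((k`!)%:R * ((n - k).+1`!)%:R))
  end.

Definition bernoulli (n : nat) : rat := nth 0 (bern_list n) n.

(* Let f_r(n) be the left-hand side, with weights w_r(k) = (-1)^k k!/(k+r),
   and T_r(n) = sum_(k<r) |s(r,k+1)| B_(n+k).  Through the recurrence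
   S(n+1,k) = k S(n,k) + S(n,k-1), the identity
   k w_r(k) + w_r(k+1) + r w_r(k) = r w_(r+1)(k) becomes
   r f_(r+1)(n) = f_r(n+1) + r f_r(n), and the recurrence of |s| gives the same
   relation for T_r, so (r-1)! f_r = T_r follows by induction on r once
   f_1 = B is known.  Both f_1 and B satisfy the binomial recurrence
   sum_(m<=n) C(n+1,m) x_m = [n = 0], which has a unique solution: for f_1 this
   comes from sum_(m<=n) C(n+1,m) S(m,k) = (k+1) S(n+1,k+1), which turns it
   into -f_0(n+1), and f_0(n+1) = -[n = 0] since the weights w_0 telescope. *)

From mathcomp Require Import all_boot all_order all_algebra.
From mathcomp Require Import ring zify.

Set Implicit Arguments.
Unset Strict Implicit.
Unset Printing Implicit Defensive.
Import Order.TTheory GRing.Theory Num.Theory.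
Local Open Scope ring_scope.

Lemma stirling2_eq0 n k : (n < k)%N -> stirling2 n k = 0%N.
Proof. by elim: n k => [|n IHn] [|k] //= ltnk; rewrite !IHn //; lia. Qed.

Lemma stirling2n0 n : stirling2 n 0 = (n == 0)%N.
Proof. by case: n. Qed.

Lemma sum_binomial_stirling2 n j :
  (\sum_(m < n.+1) 'C(n, m) * stirling2 m j)%N = stirling2 n.+1 j.+1.
Proof.
elim: n j => [|n IHn] j; first by rewrite big_ord1 /= bin0 mul1n muln0.
have -> : (\sum_(m < n.+2) 'C(n.+1, m) * stirling2 m j =
           \sum_(m < n.+1) 'C(n, m) * stirling2 m j +
           \sum_(m < n.+1) 'C(n, m) * stirling2 m.+1 j)%N.
  rewrite big_ord_recl bin0 mul1n.
  under eq_bigr => m _ do rewrite binS mulnDl.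
  rewrite big_split addnA /=; congr (_ + _).
  rewrite [RHS]big_ord_recl bin0 mul1n; congr (_ + _).
  by rewrite big_ord_recr /= bin_small // mul0n addn0.
case: j => [|j].
  rewrite [X in (_ + X)%N]big1 => [|m _]; last exact: muln0.
  by rewrite addn0 IHn /=; lia.
under [X in (_ + X)%N]eq_bigr => m _ do rewrite [stirling2 _ _]/= mulnDr mulnCA.
by rewrite big_split /= -big_distrr /= !IHn /=; lia.
Qed.

Lemma sum_binomial_stirling2_lt n k :
  (\sum_(m < n.+1) 'C(n.+1, m) * stirling2 m k)%N = (k.+1 * stirling2 n.+1 k.+1)%N.
Proof.
move: (sum_binomial_stirling2 n.+1 k).
by rewrite big_ord_recr /= binn mul1n => /addIn.
Qed.

Section Stirling2Transform.

Variable R : comPzRingType.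
Implicit Type a : nat -> R.

Definition stirling2_transform a n : R := \sum_(k < n.+1) a k * (stirling2 n k)%:R.

Lemma stirling2_transform_widen a n N : (n < N)%N ->
  stirling2_transform a n = \sum_(k < N) a k * (stirling2 n k)%:R.
Proof.
move=> ltnN; rewrite /stirling2_transform.
rewrite (big_ord_widen _ (fun k => a k * (stirling2 n k)%:R) ltnN) big_mkcond.
apply: eq_bigr => k _; case: ltnP => // lenk.
by rewrite stirling2_eq0 // mulr0.
Qed.

Lemma stirling2_transformS a n :
  stirling2_transform a n.+1 = stirling2_transform (fun k => k%:R * a k + a k.+1) n.
Proof.
rewrite /stirling2_transform big_ord_recl mulr0 add0r.
under eq_bigr => k _ do rewrite [stirling2 _ _]/= natrD natrM mulrDr mulrCA.
rewrite big_split /=; under [RHS]eq_bigr => k _ do rewrite mulrDl.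
rewrite [RHS]big_split /=; congr (_ + _).
rewrite [RHS]big_ord_recl !mul0r add0r big_ord_recr /= stirling2_eq0 // !mulr0 addr0.
by apply: eq_bigr => k _; rewrite mulrA.
Qed.

Lemma sum_binomial_stirling2_transform a n :
  \sum_(m < n.+1) 'C(n.+1, m)%:R * stirling2_transform a m =
  stirling2_transform (fun k => k%:R * a k.-1) n.+1.
Proof.
under eq_bigr => m _ do rewrite (stirling2_transform_widen a (ltn_ord m)) big_distrr.
rewrite exchange_big /= /stirling2_transform [RHS]big_ord_recl !mul0r add0r.
apply: eq_bigr => k _; rewrite !lift0 -mulrA mulrCA -natrM.
rewrite -sum_binomial_stirling2_lt natr_sum big_distrr; apply: eq_bigr => m _.
by rewrite natrM mulrCA.
Qed.

End Stirling2Transform.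

Definition weight (r k : nat) : rat := (-1) ^+ k * ((k`!)%:R / (k + r)%:R).

Lemma weightS r k : (0 < r)%N ->
  r%:R * weight r.+1 k = k%:R * weight r k + weight r k.+1 + r%:R * weight r k.
Proof.
move=> r_gt0; rewrite /weight exprS factS natrM addSn addnS -addn1 natrD; field.
by rewrite -natrD natr1 !pnatr_eq0 andbT; lia.
Qed.

(* At [k = 0] the next two lemmas rely on [weight 0 0 = 0! / 0 = 0]. *)
Lemma weight0S k : k%:R * weight 0 k + weight 0 k.+1 = - (k == 0%N)%:R.
Proof.
rewrite /weight !addn0 exprS factS natrM.
case: k => [|k]; first by rewrite mul0r add0r invr1 !mulr1.
rewrite /= oppr0; field.
by rewrite -(natrD _ 2 k) -(natrD _ 1 k) !pnatr_eq0.
Qed.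

Lemma natr_weight1_pred k : k%:R * weight 1 k.-1 = - weight 0 k.
Proof.
case: k => [|k]; first by rewrite mul0r /weight invr0 !mulr0 oppr0.
rewrite /weight addn0 addn1 exprS factS natrM /=; field.
by rewrite -(natrD _ 1 k) pnatr_eq0.
Qed.

Lemma stirling2_transform_weightS n r : (0 < r)%N ->
  r%:R * stirling2_transform (weight r.+1) n =
  stirling2_transform (weight r) n.+1 + r%:R * stirling2_transform (weight r) n.
Proof.
move=> r_gt0; rewrite stirling2_transformS /stirling2_transform !big_distrr -big_split.
by apply: eq_bigr => k _ /=; rewrite [LHS]mulrA weightS // mulrDl [in RHS]mulrA.
Qed.

Lemma stirling2_transform_weight0S n :
  stirling2_transform (weight 0) n.+1 = - (n == 0%N)%:R.
Proof.
rewrite stirling2_transformS /stirling2_transform big_ord_recl /= weight0S.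
rewrite big1 => [|k _]; last by rewrite weight0S oppr0 mul0r.
by rewrite addr0 stirling2n0 mulN1r.
Qed.

Lemma sum_binomial_stirling2_transform_weight1 n :
  \sum_(m < n.+1) 'C(n.+1, m)%:R * stirling2_transform (weight 1) m = (n == 0%N)%:R.
Proof.
rewrite sum_binomial_stirling2_transform -[RHS]opprK -stirling2_transform_weight0S.
rewrite /stirling2_transform -sumrN; apply: eq_bigr => k _.
by rewrite natr_weight1_pred mulNr.
Qed.

Lemma size_bern_list n : size (bern_list n) = n.+1.
Proof. by elim: n => //= n IHn; rewrite size_rcons IHn. Qed.

Lemma nth_bern_list n k : (k <= n)%N -> nth 0 (bern_list n) k = bernoulli k.
Proof.
elim: n => [|n IHn]; first by rewrite leqn0 => /eqP ->.
rewrite leq_eqVlt => /predU1P[-> //|ltkn].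
by rewrite /= nth_rcons size_bern_list ltkn IHn.
Qed.

Lemma bernoulliS n : bernoulli n.+1 = - (n.+1`!)%:R *
  \sum_(k < n.+1) bernoulli k / ((k`!)%:R * ((n.+1 - k).+1`!)%:R).
Proof.
rewrite {1}/bernoulli /= nth_rcons size_bern_list ltnn eqxx.
by congr (_ * _); apply: eq_bigr => k _; rewrite nth_bern_list // -ltnS.
Qed.

Lemma sum_binomial_bernoulli n :
  \sum_(m < n.+1) 'C(n.+1, m)%:R * bernoulli m = (n == 0%N)%:R.
Proof.
case: n => [|n]; first by rewrite big_ord1 bin0 mul1r.
have binE k : (k <= n.+1)%N ->
    'C(n.+2, k)%:R = (n.+2`!)%:R / ((k`!)%:R * ((n.+1 - k).+1`!)%:R) :> rat.
  move=> lekn; rewrite -(bin_fact (leqW lekn)) -subSn // !natrM mulfK //.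
  by rewrite mulf_neq0 // pnatr_eq0 -lt0n fact_gt0.
rewrite big_ord_recr /= binSn bernoulliS mulrA mulrN -natrM -factS mulNr.
rewrite big_distrr -sumrN -big_split big1 // => k _ /=.
by rewrite binE 1?ltnW // mulrAC mulrA subrr.
Qed.

Lemma binomial_transform_inj (R : numDomainType) (b c : nat -> R) :
  (forall n, \sum_(m < n.+1) 'C(n.+1, m)%:R * b m =
             \sum_(m < n.+1) 'C(n.+1, m)%:R * c m) ->
  b =1 c.
Proof.
move=> eq_bc; elim/ltn_ind=> n IHn; move: (eq_bc n).
rewrite !big_ord_recr /= binSn (eq_bigr (fun m : 'I_n => 'C(n.+1, m)%:R * c m)).
  by move/addrI/mulfI; apply; rewrite pnatr_eq0.
by move=> m _; rewrite IHn.
Qed.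

Lemma stirling2_transform_weight1 n : stirling2_transform (weight 1) n = bernoulli n.
Proof.
apply: binomial_transform_inj => {}n.
by rewrite sum_binomial_stirling2_transform_weight1 sum_binomial_bernoulli.
Qed.

Fixpoint ustirling1 (r k : nat) : nat :=
  match r, k with
  | 0, 0 => 1
  | 0, _.+1 => 0
  | _.+1, 0 => 0
  | r'.+1, k'.+1 => ustirling1 r' k' + r' * ustirling1 r' k'.+1
  end.

Lemma ustirling1n0 r : ustirling1 r 0 = (r == 0)%N.
Proof. by case: r. Qed.

Lemma ustirling1SS r k :
  ustirling1 r.+1 k.+1 = (ustirling1 r k + r * ustirling1 r k.+1)%N.
Proof. by []. Qed.

Lemma ustirling1_eq0 r k : (r < k)%N -> ustirling1 r k = 0%N.
Proof. by elim: r k => [|r IHr] [|k] //= ltrk; rewrite !IHr //; lia. Qed.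

Lemma stirling1E r k : stirling1 r k = (-1) ^+ (r + k) * (ustirling1 r k)%:Z.
Proof.
rewrite /stirling1; elim: r k => [|r IHr] k.
  by rewrite /falling_poly big_ord0 coef1; case: k => [|k]; rewrite ?mulr1 ?mulr0.
rewrite /falling_poly big_ord_recr /= -/(falling_poly r) mulrBr coefB coefMC.
case: k => [|k].
  by rewrite coefMX /= IHr; case: r {IHr} => [|r] /=; rewrite !mulr0 ?mul0r subr0.
by rewrite coefMX !IHr addSn addnS !exprS /= PoszD PoszM natz; ring.
Qed.

Lemma abs_stirling1 r k : `|stirling1 r k| = (ustirling1 r k)%:Z.
Proof. by rewrite stirling1E normrM normrX normrN1 expr1n mul1r. Qed.

Definition ustirling1_bernoulli_sum (n r : nat) : rat :=
  \sum_(k < r) (ustirling1 r k.+1)%:R * bernoulli (n + k).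

Lemma ustirling1_bernoulli_sumS n r : (0 < r)%N ->
  ustirling1_bernoulli_sum n r.+1 =
  ustirling1_bernoulli_sum n.+1 r + r%:R * ustirling1_bernoulli_sum n r.
Proof.
move=> r_gt0; rewrite /ustirling1_bernoulli_sum big_distrr.
under [LHS]eq_bigr => k _ do rewrite ustirling1SS natrD natrM mulrDl -mulrA.
rewrite big_split /=; congr (_ + _).
  rewrite big_ord_recl ustirling1n0 gtn_eqF // mul0r add0r.
  by apply: eq_bigr => k _; rewrite addnS.
by rewrite big_ord_recr /= ustirling1_eq0 // mul0r mulr0 addr0.
Qed.

Lemma fact_stirling2_transform_weight r n :
  (r`!)%:R * stirling2_transform (weight r.+1) n = ustirling1_bernoulli_sum n r.+1.
Proof.
elim: r n => [|r IHr] n.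
  by rewrite mul1r stirling2_transform_weight1 /ustirling1_bernoulli_sum big_ord1 addn0 mul1r.
rewrite ustirling1_bernoulli_sumS // -!IHr factS natrM -mulrA.
by rewrite mulrCA stirling2_transform_weightS // mulrDr mulrCA.
Qed.

Theorem theorem5 (r : nat) (hr : (1 <= r)%N) (n : nat) :
  \sum_(k < n.+1) (-1) ^+ k * ((k`!)%:R / (k + r)%:R) * (stirling2 n k)%:R
  = (((r.-1)`!)%:R)^-1 *
    \sum_(k < r) (`|stirling1 r k.+1|%:~R : rat) * bernoulli (n + k).
Proof.
case: r hr => // r _ /=.
under [X in _ = _ * X]eq_bigr => k _ do rewrite abs_stirling1.
rewrite -[LHS]/(stirling2_transform (weight r.+1) n).
rewrite -[X in _ = _ * X]/(ustirling1_bernoulli_sum n r.+1).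
rewrite -fact_stirling2_transform_weight.
by rewrite mulKf // pnatr_eq0 -lt0n fact_gt0.
Qed.
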